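(* Let $t_1, t_2 \in \mathsf{Topo}$ and let $f: \mathsf{Addr}(t_1) \to \mathsf{Addr}(t_2)$ be an embedding. Then (1) if $t_1 = *$, then $t_2 = *$; and (2) if $t_1 = \mathsf{Node}(\vec t_1)$, then for each $1 \le i \le |\vec t_1|$ there exists an embedding $f_i$ of $t_1/i$ inside $t_2/f(i)$ satisfying $f(i\cdot\alpha) = f(i)\cdot f_i(\alpha)$ for all $\alpha \in \mathsf{Addr}(t_1/i)$.
   Context: Topologies: $\mathsf{Topo}$ is the smallest set with $*\in\mathsf{Topo}$ and $\mathsf{Node}(\vec t)\in\mathsf{Topo}$ for every $n\in\mathbb{N}$ and list $\vec t\in\mathsf{Topo}^n$ (entries $\vec t[i]$). Addresses: $\mathsf{Addr}(t)\subseteq\mathbb{N}^*$ is the smallest set with $\epsilon\in\mathsf{Addr}(t)$ and $i\cdot\alpha\in\mathsf{Addr}(\mathsf{Node}(\vec t))$ for $1\le i\le n$, $\alpha\in\mathsf{Addr}(\vec t[i])$. Subtrees: $t/\epsilon=t$, $\mathsf{Node}(\vec t)/(i\cdot\alpha)=\vec t[i]/\alpha$. An embedding of $t_1$ in $t_2$ is an injective $f:\mathsf{Addr}(t_1)\to\mathsf{Addr}(t_2)$ with $f(\epsilon)=\epsilon$; $t_2/f(\alpha)=*$ whenever $t_1/\alpha=*$; and for all $\alpha,\alpha'$, $\alpha$ is a prefix of $\alpha'$ iff $f(\alpha)$ is a prefix of $f(\alpha')$. *)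

From mathcomp Require Import all_boot.
Set Implicit Arguments. Unset Strict Implicit. Unset Printing Implicit Defensive.

Inductive topo : Type :=
| Leaf : topo
| Node : seq topo -> topo.

(* Addresses are sequences of (1-based) child indices. *)
Definition address := seq nat.

Definition child (ts : seq topo) (i : nat) : topo := nth Leaf ts i.-1.

Inductive is_addr : topo -> address -> Prop :=
| addr_nil : forall t, is_addr t [::]
| addr_cons : forall (ts : seq topo) (i : nat) (a : address),
    1 <= i <= size ts -> is_addr (child ts i) a -> is_addr (Node ts) (i :: a).

Fixpoint subtree (t : topo) (a : address) : option topo :=
  match a with
  | [::] => Some t
  | i :: a' =>
      match t with
      | Leaf => None
      | Node ts => if (1 <= i <= size ts) then subtree (child ts i) a' else None
      end
  end.

Definition is_prefix (a b : address) : Prop := exists c, b = a ++ c.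

(* f : Addr(t1) -> Addr(t2) is an embedding of t1 in t2 (f is given as a
   total function on addresses; only its values on Addr(t1) matter). *)
Definition embedding (t1 t2 : topo) (f : address -> address) : Prop :=
  [/\ (forall a, is_addr t1 a -> is_addr t2 (f a)),
      (forall a b, is_addr t1 a -> is_addr t1 b -> f a = f b -> a = b),
      f [::] = [::],
      (forall a, is_addr t1 a -> subtree t1 a = Some Leaf ->
                 subtree t2 (f a) = Some Leaf)
    & (forall a b, is_addr t1 a -> is_addr t1 b ->
                   (is_prefix a b <-> is_prefix (f a) (f b)))].

From mathcomp Require Import all_boot.
From Stdlib Require Import Setoid.

Set Implicit Arguments.
Unset Strict Implicit.

(* An embedding preserves the prefix order in both directions, so every
   image f (p ++ a) extends f p; chopping off f p restricts f to an embedding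
   of the subtree of t1 at p into the subtree of t2 at f p.  The required f_i
   is this restriction at p = [:: i]. *)

Lemma is_addr_subtree t a : is_addr t a <-> exists s, subtree t a = Some s.
Proof.
split.
- elim=> [t0|ts i a' i_range _ [s sub_s]]; first by exists t0.
  by exists s => /=; rewrite i_range.
- elim: a t => [|i a IH] t; first by constructor.
  case: t => [|ts] /= [s] //.
  by case: ifP => // i_range sub_s; constructor => //; apply: IH; exists s.
Qed.

Lemma subtree_cat t p q :
  subtree t (p ++ q) = if subtree t p is Some s then subtree s q else None.
Proof.
elim: p t => [|i p IH] [|ts] //=.
by case: ifP.
Qed.

Lemma is_addr_cat t p s a :
  subtree t p = Some s -> is_addr s a -> is_addr t (p ++ a).
Proof.
move=> tp /is_addr_subtree [s' sa].
by apply/is_addr_subtree; exists s'; rewrite subtree_cat tp.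
Qed.

Lemma is_prefix_cat2 p a b : is_prefix (p ++ a) (p ++ b) <-> is_prefix a b.
Proof.
split=> [[c]|[c ->]]; last by exists c; rewrite catA.
rewrite -catA => /(congr1 (drop (size p))).
by rewrite !drop_size_cat // => ->; exists c.
Qed.

Lemma embedding_Leaf t f : embedding Leaf t f -> t = Leaf.
Proof.
case=> _ _ f0 f_leaf _.
by move: (f_leaf [::] (addr_nil _) erefl); rewrite f0 => -[].
Qed.

Definition restr (f : address -> address) (p : address) : address -> address :=
  fun a => drop (size (f p)) (f (p ++ a)).

Section Restriction.

Variables (t1 t2 s1 s2 : topo) (f : address -> address) (p : address).
Hypotheses (f_emb : embedding t1 t2 f)
  (t1p : subtree t1 p = Some s1) (t2fp : subtree t2 (f p) = Some s2).

Lemma restr_cat a : is_addr s1 a -> f (p ++ a) = f p ++ restr f p a.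
Proof.
move=> s1a; case: f_emb => _ _ _ _ f_prefix.
have t1p_addr : is_addr t1 p by rewrite -[p]cats0; exact: is_addr_cat t1p (addr_nil _).
have [c fpa] : is_prefix (f p) (f (p ++ a)).
  by apply: (f_prefix _ _ t1p_addr (is_addr_cat t1p s1a)).1; exists a.
by rewrite /restr fpa drop_size_cat.
Qed.

Lemma subtree_restr a :
  is_addr s1 a -> subtree t2 (f (p ++ a)) = subtree s2 (restr f p a).
Proof. by move=> s1a; rewrite restr_cat // subtree_cat t2fp. Qed.

Lemma restr_embedding : embedding s1 s2 (restr f p).
Proof.
case: f_emb => f_addr f_inj f0 f_leaf f_prefix.
have t1pa a : is_addr s1 a -> is_addr t1 (p ++ a) by exact: is_addr_cat t1p.
split.
- move=> a s1a; apply/is_addr_subtree; rewrite -subtree_restr //.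
  exact/is_addr_subtree/f_addr/t1pa.
- move=> a b s1a s1b eq_ab.
  have : f (p ++ a) = f (p ++ b) by rewrite !restr_cat // eq_ab.
  move/f_inj => /(_ (t1pa _ s1a) (t1pa _ s1b)).
  by move/(congr1 (drop (size p))); rewrite !drop_size_cat.
- by rewrite /restr cats0 drop_size.
- move=> a s1a leaf_a; rewrite -subtree_restr //.
  by apply: f_leaf (t1pa _ s1a) _; rewrite subtree_cat t1p.
- move=> a b s1a s1b.
  rewrite -(is_prefix_cat2 p) (f_prefix _ _ (t1pa _ s1a) (t1pa _ s1b)).
  by rewrite !restr_cat // is_prefix_cat2.
Qed.

End Restriction.

Theorem lemma5p3 (t1 t2 : topo) (f : address -> address) :
  embedding t1 t2 f ->
  (t1 = Leaf -> t2 = Leaf) /\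
  (forall ts1 : seq topo, t1 = Node ts1 ->
     forall i : nat, 1 <= i <= size ts1 ->
       exists s2 : topo, subtree t2 (f [:: i]) = Some s2 /\
       exists fi : address -> address,
         embedding (child ts1 i) s2 fi /\
         (forall a, is_addr (child ts1 i) a -> f (i :: a) = f [:: i] ++ fi a)).
Proof.
move=> f_emb; split=> [t1_leaf | ts1 t1_node i i_range].
  by move: f_emb; rewrite t1_leaf => /embedding_Leaf.
have t1i : subtree t1 [:: i] = Some (child ts1 i) by rewrite t1_node /= i_range.
have [s2 t2fi] : exists s2, subtree t2 (f [:: i]) = Some s2.
  case: f_emb => f_addr _ _ _ _; apply/is_addr_subtree/f_addr.
  by apply/is_addr_subtree; exists (child ts1 i).
exists s2; split=> //; exists (restr f [:: i]); split.
- exact: restr_embedding f_emb t1i t2fi.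
- by move=> a /(restr_cat f_emb t1i).
Qed.
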